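(* Let $L\ne\{0,1\}$ be a totally ordered C-lattice domain in which every element is a join of principal elements. The following are equivalent: (i) $L$ is sharp; (ii) $L$ is pseudo-Dedekind; (iii) $L$ is isomorphic (as an ordered multiplicative lattice) to $\mathbb{Z}_-$ or to $\mathbb{R}_1$.
   Context: A multiplicative lattice is a complete lattice $(L,\le)$ with bottom $0$ and top $1$ which is also a commutative monoid with identity $1$ such that $a(\bigvee_\alpha b_\alpha)=\bigvee_\alpha(ab_\alpha)$ for all $a,b_\alpha\in L$. For $x,y\in L$, $(y:x)=\bigvee\{a\in L: ax\le y\}$. An element $c$ is compact if $c\le\bigvee S$ implies $c\le\bigvee T$ for some finite $T\subseteq S$. A C-lattice is a multiplicative lattice in which $1$ is compact, the product of two compact elements is compact, and every element is a join of compact elements. A proper element $p\ne1$ is prime if $xy\le p$ implies $x\le p$ or $y\le p$; $L$ is a domain if $0$ is prime. An element $x$ is principal if $y\wedge zx=((y:x)\wedge z)x$ and $y\vee(z:x)=((yx\vee z):x)$ for all $y,z\in L$. $L$ is sharp if whenever $a_1a_2\le b$ with $a_1,a_2,b\in L$, there exist $b_1,b_2\in L$ with $a_i\le b_i$ ($i=1,2$) and $b=b_1b_2$. $L$ is pseudo-Dedekind if $(x:a)$ is principal whenever $x,a\in L$ and $x$ is principal. $\mathbb{Z}_-$ is the set of integers $\le0$ together with a symbol $-\infty$, with the usual order and with addition as multiplication (so $0$ is the top/identity and $-\infty$ the bottom). $\mathbb{R}_1$ is the set of all intervals $(r,\infty]$ and $[r,\infty]$ with $r$ a nonnegative real number,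 together with $\{\infty\}$, ordered by inclusion and with interval (Minkowski) addition as multiplication (so $[0,\infty]$ is the top/identity and $\{\infty\}$ the bottom); it is isomorphic to the ideal lattice of a valuation domain with value group $\mathbb{R}$. *)

From Stdlib Require Import Reals ZArith List.

Record MultLattice := {
  ml_car :> Type;
  ml_le : ml_car -> ml_car -> Prop;
  ml_sup : (ml_car -> Prop) -> ml_car;
  ml_mul : ml_car -> ml_car -> ml_car;
  ml_one : ml_car;
  ml_le_refl : forall x, ml_le x x;
  ml_le_antisym : forall x y, ml_le x y -> ml_le y x -> x = y;
  ml_le_trans : forall x y z, ml_le x y -> ml_le y z -> ml_le x z;
  ml_sup_ub : forall (S : ml_car -> Prop) x, S x -> ml_le x (ml_sup S);
  ml_sup_least : forall (S : ml_car -> Prop) y,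
      (forall x, S x -> ml_le x y) -> ml_le (ml_sup S) y;
  ml_one_top : forall x, ml_le x ml_one;
  ml_mulA : forall x y z, ml_mul x (ml_mul y z) = ml_mul (ml_mul x y) z;
  ml_mulC : forall x y, ml_mul x y = ml_mul y x;
  ml_mul1 : forall x, ml_mul ml_one x = x;
  ml_mul_sup : forall a (S : ml_car -> Prop),
      ml_mul a (ml_sup S) = ml_sup (fun z => exists b, S b /\ z = ml_mul a b)
}.

Section Notions.
Variable L : MultLattice.

Definition ml_bot : L := ml_sup L (fun _ => False).
Definition ml_join (x y : L) : L := ml_sup L (fun z => z = x \/ z = y).
Definition ml_meet (x y : L) : L :=
  ml_sup L (fun z => ml_le L z x /\ ml_le L z y).
Definition ml_colon (y x : L) : L := ml_sup L (fun a => ml_le L (ml_mul L a x) y).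

Definition compact (c : L) : Prop :=
  forall S : L -> Prop, ml_le L c (ml_sup L S) ->
    exists T : list L, (forall t, In t T -> S t) /\
                       ml_le L c (ml_sup L (fun z => In z T)).

Definition C_lattice : Prop :=
  compact (ml_one L) /\
  (forall a b, compact a -> compact b -> compact (ml_mul L a b)) /\
  (forall x, exists S : L -> Prop, (forall c, S c -> compact c) /\ x = ml_sup L S).

Definition prime_el (p : L) : Prop :=
  p <> ml_one L /\
  forall x y, ml_le L (ml_mul L x y) p -> ml_le L x p \/ ml_le L y p.

Definition is_domain : Prop := prime_el ml_bot.

Definition principal (x : L) : Prop :=
  forall y z,
    ml_meet y (ml_mul L z x) = ml_mul L (ml_meet (ml_colon y x) z) x /\
    ml_join y (ml_colon z x) = ml_colon (ml_join (ml_mul L y x) z) x.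

Definition sharp : Prop :=
  forall a1 a2 b, ml_le L (ml_mul L a1 a2) b ->
    exists b1 b2, ml_le L a1 b1 /\ ml_le L a2 b2 /\ b = ml_mul L b1 b2.

Definition pseudo_Dedekind : Prop :=
  forall x a, principal x -> principal (ml_colon x a).

Definition totally_ordered : Prop := forall x y, ml_le L x y \/ ml_le L y x.

Definition joins_of_principals : Prop :=
  forall x, exists S : L -> Prop, (forall p, S p -> principal p) /\ x = ml_sup L S.

Definition not_01 : Prop := exists x : L, x <> ml_bot /\ x <> ml_one L.

Definition iso_to (T : Type) (P : T -> Prop) (leT : T -> T -> Prop)
  (mulT : T -> T -> T) : Prop :=
  exists f : L -> T,
    (forall x, P (f x)) /\
    (forall t, P t -> exists x, f x = t) /\
    (forall x y, f x = f y -> x = y) /\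
    (forall x y, ml_le L x y <-> leT (f x) (f y)) /\
    (forall x y, f (ml_mul L x y) = mulT (f x) (f y)).

End Notions.

(* Z_- : integers <= 0 together with -oo (represented by None),
   usual order, addition as multiplication. *)
Definition Zm_carrier (t : option Z) : Prop :=
  match t with Some z => (z <= 0)%Z | None => True end.
Definition Zm_le (s t : option Z) : Prop :=
  match s, t with
  | None, _ => True
  | Some _, None => False
  | Some a, Some b => (a <= b)%Z
  end.
Definition Zm_mul (s t : option Z) : option Z :=
  match s, t with
  | Some a, Some b => Some (a + b)%Z
  | _, _ => None
  end.

(* R_1 : subsets of [0, oo] (extended reals; None stands for oo) of the form
   (r, oo], [r, oo] with r >= 0 real, and {oo}; ordered by inclusion, with
   Minkowski addition as multiplication. *)
Definition ext := option R.
Definition ext_add (a b : ext) : ext :=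
  match a, b with Some x, Some y => Some (x + y)%R | _, _ => None end.
Definition Iopen (r : R) : ext -> Prop :=
  fun x => match x with None => True | Some y => (r < y)%R end.
Definition Iclosed (r : R) : ext -> Prop :=
  fun x => match x with None => True | Some y => (r <= y)%R end.
Definition Iinf : ext -> Prop := fun x => x = None.
Definition R1_carrier (A : ext -> Prop) : Prop :=
  (exists r, (0 <= r)%R /\ A = Iopen r) \/
  (exists r, (0 <= r)%R /\ A = Iclosed r) \/
  A = Iinf.
Definition R1_le (A B : ext -> Prop) : Prop := forall x, A x -> B x.
Definition R1_mul (A B : ext -> Prop) : ext -> Prop :=
  fun z => exists a b, A a /\ B b /\ z = ext_add a b.

From Stdlib Require Import Reals ZArith List Lia Lra Classical ClassicalEpsilon
  FunctionalExtensionality PropExtensionality.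

(* Nonzero principal elements of a totally ordered domain are exactly the [regular] ones:
   cancellative and dividing every element below them.  Sharpness factors [x] as [b1 b2]
   with [(x : a) <= b1] and [a <= b2]; then [(x : a) = b1] is a factor of the regular [x],
   hence regular.

   Conversely, if [L] is pseudo-Dedekind, colons of regular elements are regular, which makes
   the monoid of regular elements archimedean; compactness of [1] makes regular elements
   compact, and since every element is a join of principal ones it is determined by the
   regular elements below it.  If there is a largest regular [pi <> 1], the regular elements
   are the powers of [pi] and [L] is [Z_-].  Otherwise they are dense, and the real exponent
   [val a] ("[a = p ^ val a]" for a fixed regular [p <> 1]) is an order-reversing isomorphism
   from them onto [[0, oo)]; sending [x] to the set of exponents of the regular elements below
   [x] identifies [L] with [R_1].  Both models are sharp, and sharpness transfers along
   isomorphisms. *)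

Lemma nat_least (P : nat -> Prop) n : P n -> exists m, P m /\ forall k, P k -> m <= k.
Proof.
  intros Hn.
  destruct (dec_inh_nat_subset_has_unique_least_element P (fun k => classic (P k)))
    as [m [[Hm Hleast] _]]; eauto.
Qed.

Lemma nat_last_before (P : nat -> Prop) K : P 0 -> ~ P K -> exists m, P m /\ ~ P (S m).
Proof.
  intros H0 HK; induction K as [| K IH]; [contradiction |].
  destruct (classic (P K)); eauto.
Qed.

Section RealFacts.
Local Open Scope R_scope.

Lemma INR_div_le (m n m' n' : nat) : (0 < n)%nat -> (0 < n')%nat -> (m' * n <= m * n')%nat ->
  INR m' / INR n' <= INR m / INR n.
Proof.
  intros Hn Hn' H.
  assert (0 < INR n) by (apply lt_0_INR; lia).
  assert (0 < INR n') by (apply lt_0_INR; lia).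
  apply le_INR in H; rewrite !mult_INR in H.
  apply Rmult_le_reg_r with (INR n * INR n'); [nra |].
  replace (INR m' / INR n' * (INR n * INR n')) with (INR m' * INR n) by (field; lra).
  replace (INR m / INR n * (INR n * INR n')) with (INR m * INR n') by (field; lra).
  exact H.
Qed.

Lemma Rle_of_le_plus_div (x y c : R) :
  (forall n, (0 < n)%nat -> x <= y + c / INR n) -> x <= y.
Proof.
  intros H; apply Rle_plus_epsilon; intros eps Heps.
  destruct (INR_archimed eps c Heps) as [n Hn].
  assert (Hn1 : 0 < INR (S n)) by (apply lt_0_INR; lia).
  assert (c / INR (S n) < eps).
  { apply Rmult_lt_reg_r with (INR (S n)); auto.
    unfold Rdiv; rewrite Rmult_assoc, Rinv_l by lra; rewrite S_INR; nra. }
  specialize (H (S n) ltac:(lia)); lra.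
Qed.

Lemma up_closed_interval (E : R -> Prop) :
  (forall t t', E t -> t <= t' -> E t') -> (exists t, E t) -> (forall t, E t -> 0 <= t) ->
  exists r, 0 <= r /\ ((forall t, E t <-> r < t) \/ (forall t, E t <-> r <= t)).
Proof.
  intros Hup [t0 Ht0] Hpos.
  destruct (completeness (fun t => E (- t))) as [m [Hm Hlub]].
  - exists 0; intros t Ht; specialize (Hpos _ Ht); lra.
  - exists (- t0); now rewrite Ropp_involutive.
  - assert (Hlow : forall t, E t -> - m <= t).
    { intros t Ht; enough (- t <= m) by lra; apply Hm; now rewrite Ropp_involutive. }
    assert (Hgt : forall t, - m < t -> E t).
    { intros t Ht; apply NNPP; intros Nt.
      enough (m <= - t) by lra.
      apply Hlub; intros s Hs; apply Rnot_lt_le; intros Hst.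
      apply Nt, (Hup (- s)); auto; lra. }
    exists (- m); split.
    + enough (m <= 0) by lra.
      apply Hlub; intros s Hs; specialize (Hpos _ Hs); lra.
    + destruct (classic (E (- m))) as [Em | Nm]; [right | left]; intros t; split; auto.
      * intros Ht; apply (Hup (- m)); auto.
      * intros Ht; destruct (Req_dec t (- m)) as [-> | Hne]; [contradiction |].
        specialize (Hlow _ Ht); lra.
Qed.

End RealFacts.

Lemma pred_ext {T : Type} (A B : T -> Prop) : (forall e, A e <-> B e) -> A = B.
Proof.
  intros H; apply functional_extensionality; intros e; apply propositional_extensionality, H.
Qed.

Section LatticeFacts.
Context {L : MultLattice}.
Local Notation le := (ml_le L).
Local Notation mul := (ml_mul L).
Local Notation one := (ml_one L).
Local Notation sup := (ml_sup L).
Local Notation bot := (ml_bot L).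
Local Notation col := (ml_colon L).

Lemma le_refl x : le x x. Proof. apply ml_le_refl. Qed.
Lemma le_trans x y z : le x y -> le y z -> le x z. Proof. apply ml_le_trans. Qed.
Lemma le_antisym x y : le x y -> le y x -> x = y. Proof. apply ml_le_antisym. Qed.
Lemma le_one x : le x one. Proof. apply ml_one_top. Qed.
Lemma le_sup (S : L -> Prop) x : S x -> le x (sup S). Proof. apply ml_sup_ub. Qed.
Lemma sup_le (S : L -> Prop) y : (forall x, S x -> le x y) -> le (sup S) y.
Proof. apply ml_sup_least. Qed.

Lemma one_le_eq x : le one x -> x = one.
Proof. intros H; apply le_antisym; auto using le_one. Qed.
Lemma bot_le x : le bot x.
Proof. unfold ml_bot; apply sup_le; intros _ []. Qed.
Lemma le_bot_eq x : le x bot -> x = bot.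
Proof. intros H; apply le_antisym; auto using bot_le. Qed.

Lemma mulC x y : mul x y = mul y x. Proof. apply ml_mulC. Qed.
Lemma mulA x y z : mul x (mul y z) = mul (mul x y) z. Proof. apply ml_mulA. Qed.
Lemma mul1 x : mul one x = x. Proof. apply ml_mul1. Qed.
Lemma mulr1 x : mul x one = x. Proof. rewrite mulC; apply mul1. Qed.

Lemma mul_sup_le a S y : (forall s, S s -> le (mul a s) y) -> le (mul a (sup S)) y.
Proof.
  intros H; rewrite ml_mul_sup; apply sup_le; intros z [b [Hb ->]]; auto.
Qed.

Lemma mul_le_mono_l c a b : le a b -> le (mul c a) (mul c b).
Proof.
  intros H.
  assert (Eb : sup (fun z => z = a \/ z = b) = b).
  { apply le_antisym.
    - apply sup_le; intros x [-> | ->]; auto using le_refl.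
    - apply le_sup; auto. }
  rewrite <- Eb, ml_mul_sup; apply le_sup; eauto.
Qed.
Lemma mul_le_mono_r c a b : le a b -> le (mul a c) (mul b c).
Proof. intros; rewrite (mulC a), (mulC b); apply mul_le_mono_l; auto. Qed.
Lemma mul_le_mono a b c d : le a b -> le c d -> le (mul a c) (mul b d).
Proof. intros; eapply le_trans; [apply mul_le_mono_r | apply mul_le_mono_l]; eauto. Qed.
Lemma mul_le_l a b : le (mul a b) a.
Proof. rewrite <- (mulr1 a) at 2; apply mul_le_mono_l, le_one. Qed.
Lemma mul_le_r a b : le (mul a b) b.
Proof. rewrite mulC; apply mul_le_l. Qed.
Lemma mul0r a : mul bot a = bot.
Proof. apply le_bot_eq; apply mul_le_l. Qed.
Lemma mulr0 a : mul a bot = bot.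
Proof. rewrite mulC; apply mul0r. Qed.

Lemma le_colon y x a : le (mul a x) y -> le a (col y x).
Proof. intros H; unfold ml_colon; now apply le_sup. Qed.
Lemma colon_le y x c : (forall a, le (mul a x) y -> le a c) -> le (col y x) c.
Proof. intros H; unfold ml_colon; now apply sup_le. Qed.
Lemma mul_colon_le y x : le (mul (col y x) x) y.
Proof.
  rewrite mulC; unfold ml_colon; apply mul_sup_le; intros s Hs; rewrite mulC; auto.
Qed.
Lemma colon_le_mono y y' x : le y y' -> le (col y x) (col y' x).
Proof.
  intros H; apply colon_le; intros a Ha; apply le_colon; eapply le_trans; eauto.
Qed.
Lemma le_colon_self y x : le y (col y x).
Proof. apply le_colon, mul_le_l. Qed.
Lemma colon_bot y : col y bot = one.
Proof. apply one_le_eq, le_colon; rewrite mulr0; apply bot_le. Qed.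

Lemma meet_l a b : le a b -> ml_meet L a b = a.
Proof.
  intros H; apply le_antisym; unfold ml_meet.
  - apply sup_le; intros z [? ?]; auto.
  - apply le_sup; auto using le_refl.
Qed.
Lemma meet_r a b : le b a -> ml_meet L a b = b.
Proof.
  intros H; apply le_antisym; unfold ml_meet.
  - apply sup_le; intros z [? ?]; auto.
  - apply le_sup; auto using le_refl.
Qed.
Lemma join_r a b : le a b -> ml_join L a b = b.
Proof.
  intros H; apply le_antisym; unfold ml_join.
  - apply sup_le; intros z [-> | ->]; auto using le_refl.
  - apply le_sup; auto.
Qed.
Lemma join_l a b : le b a -> ml_join L a b = a.
Proof.
  intros H; apply le_antisym; unfold ml_join.
  - apply sup_le; intros z [-> | ->]; auto using le_refl.
  - apply le_sup; auto.
Qed.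

Fixpoint mpow (x : L) (n : nat) : L :=
  match n with O => one | S n => mul x (mpow x n) end.

Lemma mpowD x i j : mpow x (i + j) = mul (mpow x i) (mpow x j).
Proof. induction i; simpl; [now rewrite mul1 | now rewrite IHi, mulA]. Qed.
Lemma mpowM x i j : mpow x (i * j) = mpow (mpow x i) j.
Proof.
  induction j; simpl; [now rewrite Nat.mul_0_r |].
  now rewrite Nat.mul_succ_r, Nat.add_comm, mpowD, IHj.
Qed.
Lemma mpowMn x y n : mpow (mul x y) n = mul (mpow x n) (mpow y n).
Proof.
  induction n; simpl; [now rewrite mul1 |].
  rewrite IHn, !mulA; f_equal; rewrite <- !mulA; f_equal; apply mulC.
Qed.
Lemma mpow_le_mono x y n : le x y -> le (mpow x n) (mpow y n).
Proof. intros H; induction n; simpl; [apply le_refl | apply mul_le_mono; auto]. Qed.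
Lemma mpow_le_anti x i j : i <= j -> le (mpow x j) (mpow x i).
Proof.
  intros H; replace j with (j - i + i) by lia; rewrite mpowD; apply mul_le_r.
Qed.

End LatticeFacts.

Section Regular.
Context {L : MultLattice}.
Local Notation le := (ml_le L).
Local Notation mul := (ml_mul L).
Local Notation one := (ml_one L).
Local Notation bot := (ml_bot L).
Local Notation col := (ml_colon L).

Record regular (x : L) : Prop := {
  regular_neq0 : x <> bot;
  regular_cancel : forall y, col (mul y x) x = y;
  regular_divides : forall y, le y x -> y = mul (col y x) x }.

Lemma regular_mul_le_cancel x a b : regular x -> le (mul a x) (mul b x) -> le a b.
Proof.
  intros Hx H. rewrite <- (regular_cancel x Hx a), <- (regular_cancel x Hx b).
  apply le_colon; rewrite (regular_cancel x Hx); exact H.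
Qed.

Lemma regular_mul_cancel x a b : regular x -> mul a x = mul b x -> a = b.
Proof.
  intros Hx H; apply le_antisym; eapply regular_mul_le_cancel; eauto;
    rewrite H; apply le_refl.
Qed.

Lemma regular_mul_eq_self x a : regular x -> mul a x = x -> a = one.
Proof. intros Hx H; apply (regular_mul_cancel x); auto; now rewrite mul1. Qed.

Lemma regular_le_mul_self x a : regular x -> le x (mul a x) -> a = one.
Proof.
  intros Hx H; apply (regular_mul_eq_self x); auto; apply le_antisym; auto using mul_le_r.
Qed.

Lemma regular_factor_cancel u v w : regular (mul u v) -> col (mul w u) u = w.
Proof.
  intros H; apply le_antisym.
  - apply colon_le; intros t Ht; apply (regular_mul_le_cancel (mul u v)); auto.
    rewrite !mulA; apply mul_le_mono_r; auto.
  - apply le_colon, le_refl.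
Qed.

Lemma regular_factor_l b1 b2 : regular (mul b1 b2) -> regular b1.
Proof.
  intros H.
  assert (H21 : regular (mul b2 b1)) by now rewrite mulC.
  split.
  - intros E; apply (regular_neq0 _ H); rewrite E; apply mul0r.
  - intros y; eapply regular_factor_cancel; eauto.
  - intros y Hy.
    set (c := col (mul y b2) (mul b1 b2)).
    assert (Ec : mul y b2 = mul c (mul b1 b2))
      by (apply (regular_divides _ H); apply mul_le_mono_r; auto).
    assert (Ey : y = mul c b1).
    { rewrite <- (regular_factor_cancel b2 b1 y H21), Ec, mulA.
      now apply regular_factor_cancel with b1. }
    apply le_antisym.
    + rewrite Ey at 1; apply mul_le_mono_r, le_colon; rewrite <- Ey; apply le_refl.
    + apply mul_colon_le.
Qed.

End Regular.

Section TotallyOrderedDomain.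
Context {L : MultLattice}.
Local Notation le := (ml_le L).
Local Notation mul := (ml_mul L).
Local Notation one := (ml_one L).
Local Notation bot := (ml_bot L).
Local Notation col := (ml_colon L).
Hypothesis Htot : totally_ordered L.
Hypothesis Hdom : is_domain L.

Lemma one_neq0 : one <> bot.
Proof. intros E; apply (proj1 Hdom); auto. Qed.

Lemma mul_eq0 a b : mul a b = bot -> a = bot \/ b = bot.
Proof.
  intros H; destruct (proj2 Hdom a b) as [Ha | Hb].
  - rewrite H; apply le_refl.
  - left; now apply le_bot_eq.
  - right; now apply le_bot_eq.
Qed.

Lemma mul_neq0 a b : a <> bot -> b <> bot -> mul a b <> bot.
Proof. intros Ha Hb H; destruct (mul_eq0 _ _ H); auto. Qed.

Lemma colon0 x : x <> bot -> col bot x = bot.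
Proof.
  intros Hx; apply le_bot_eq, colon_le; intros a Ha.
  destruct (mul_eq0 _ _ (le_bot_eq _ Ha)) as [-> | E]; [apply le_refl | contradiction].
Qed.

Lemma principal_regular x : principal L x -> x <> bot -> regular x.
Proof.
  intros Hp Hx; split; auto.
  - intros y; destruct (Hp y bot) as [_ H].
    now rewrite colon0, !join_l in H by (auto using bot_le).
  - intros y Hy; destruct (Hp y one) as [H _].
    now rewrite mul1, !meet_l in H by (auto using le_one).
Qed.

Lemma regular_principal x : regular x -> principal L x.
Proof.
  intros Hx y z; split.
  - destruct (Htot (mul z x) y) as [H | H].
    + rewrite !meet_r; auto using le_colon.
    + assert (Hyx : le y x) by (eapply le_trans; [apply H | apply mul_le_r]).
      rewrite meet_l by auto.
      destruct (Htot (col y x) z) as [H2 | H2].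
      * rewrite meet_l by auto; now apply regular_divides.
      * rewrite meet_r by auto; apply le_antisym; auto.
        eapply le_trans; [apply mul_le_mono_r, H2 | apply mul_colon_le].
  - destruct (Htot (mul y x) z) as [H | H].
    + rewrite (join_r (mul y x) z) by auto; apply join_r, le_colon; auto.
    + rewrite (join_l (mul y x) z), (regular_cancel x Hx) by auto; apply join_l.
      rewrite <- (regular_cancel x Hx y); apply colon_le_mono; auto.
Qed.

Lemma principal0 : principal L bot.
Proof.
  intros y z; rewrite !mulr0, !colon_bot; split.
  - now rewrite meet_r by apply bot_le.
  - now rewrite join_r by apply le_one.
Qed.

Lemma principal_iff x : principal L x <-> x = bot \/ regular x.
Proof.
  split.
  - intros H; destruct (classic (x = bot)); auto; right; now apply principal_regular.
  - intros [-> | H]; [apply principal0 | now apply regular_principal].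
Qed.

Lemma regular1 : regular (ml_one L).
Proof.
  assert (Hc : forall y, col y one = y).
  { intros y; apply le_antisym.
    - rewrite <- (mulr1 (col y one)); apply mul_colon_le.
    - apply le_colon; rewrite mulr1; apply le_refl. }
  split; [apply one_neq0 | intros y; now rewrite Hc, mulr1 | intros y _; now rewrite Hc, mulr1].
Qed.

Lemma regularM a b : regular a -> regular b -> regular (mul a b).
Proof.
  intros Ha Hb; split.
  - apply mul_neq0; [apply Ha | apply Hb].
  - intros y; apply le_antisym.
    + apply colon_le; intros t Ht; rewrite !mulA in Ht.
      now apply (regular_mul_le_cancel a), (regular_mul_le_cancel b).
    + apply le_colon, le_refl.
  - intros y Hy.
    assert (Ea : y = mul (col y a) a)
      by (apply (regular_divides a Ha); eapply le_trans; [apply Hy | apply mul_le_l]).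
    assert (Eb : col y a = mul (col (col y a) b) b).
    { apply (regular_divides b Hb); rewrite <- (regular_cancel a Ha b).
      apply colon_le_mono; now rewrite mulC. }
    apply le_antisym; [| apply mul_colon_le].
    rewrite Ea at 1; rewrite Eb at 1; rewrite <- mulA, (mulC b a).
    apply mul_le_mono_r, le_colon.
    rewrite (mulC a b), mulA, <- Eb, <- Ea; apply le_refl.
Qed.

Lemma mpow_regular (x : L) n : regular x -> regular (mpow x n).
Proof. intros H; induction n; simpl; [apply regular1 | now apply regularM]. Qed.

Lemma sharp_pseudo_Dedekind : sharp L -> pseudo_Dedekind L.
Proof.
  intros Hs x a Hx; apply principal_iff; apply principal_iff in Hx.
  destruct Hx as [-> | Hx].
  - destruct (classic (a = bot)) as [-> | Ha].
    + right; rewrite colon_bot; apply regular1.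
    + left; now apply colon0.
  - right.
    destruct (Hs (col x a) a x (mul_colon_le _ _)) as [b1 [b2 [H1 [H2 E]]]].
    assert (Eb1 : col x a = b1).
    { apply le_antisym; auto; apply le_colon; rewrite E; now apply mul_le_mono_l. }
    rewrite Eb1; apply (regular_factor_l b1 b2); now rewrite <- E.
Qed.

End TotallyOrderedDomain.

Section TotallyOrderedCLattice.
Context {L : MultLattice}.
Local Notation le := (ml_le L).
Local Notation mul := (ml_mul L).
Local Notation one := (ml_one L).
Local Notation sup := (ml_sup L).
Local Notation bot := (ml_bot L).
Local Notation col := (ml_colon L).
Hypothesis Htot : totally_ordered L.
Hypothesis Hdom : is_domain L.

Lemma list_upper_bound (T : list L) :
  exists m, (m = bot \/ In m T) /\ forall t, In t T -> le t m.
Proof.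
  induction T as [| a T [m [Hm HmT]]].
  - exists bot; split; auto; intros t [].
  - destruct (Htot a m) as [H | H].
    + exists m; split; [simpl; tauto |]; intros t [<- | Ht]; auto.
    + exists a; split; [simpl; tauto |].
      intros t [<- | Ht]; [apply le_refl | eapply le_trans; eauto].
Qed.

Hypothesis HCl : C_lattice L.

Lemma mem_of_one_le_sup (S : L -> Prop) : le one (sup S) -> S one.
Proof.
  intros H; destruct (proj1 HCl S H) as [T [HTS HT]].
  destruct (list_upper_bound T) as [m [[-> | Hm] HmT]].
  - exfalso; apply (one_neq0 Hdom); symmetry; apply one_le_eq.
    eapply le_trans; [apply HT | apply sup_le; auto].
  - replace one with m; auto; apply one_le_eq.
    eapply le_trans; [apply HT | apply sup_le; auto].
Qed.

(* Since [c] divides everything below it, [c <= sup S] rescales to [1 <= sup (S : c)],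
   where compactness of [1] applies. *)
Lemma regular_le_sup c (S : L -> Prop) :
  regular c -> le c (sup S) -> exists s, S s /\ le c s.
Proof.
  intros Hc H; apply NNPP; intros N.
  assert (HS : forall s, S s -> le s c)
    by (intros s Hs; destruct (Htot s c); auto; exfalso; eauto).
  set (S' := fun a => exists s, S s /\ a = col s c).
  assert (H1 : le one (sup S')).
  { apply (regular_mul_le_cancel c); auto; rewrite mul1.
    eapply le_trans; [apply H | apply sup_le; intros s Hs].
    rewrite (regular_divides c Hc s (HS s Hs)) at 1.
    apply mul_le_mono_r, le_sup; red; eauto. }
  destruct (mem_of_one_le_sup S' H1) as [s [Hs E]].
  apply N; exists s; split; auto.
  rewrite <- (mul1 c), E; apply mul_colon_le.
Qed.

Hypothesis Hj : joins_of_principals L.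

Lemma le_of_regular_le x y : (forall a, regular a -> le a x -> le a y) -> le x y.
Proof.
  intros H; destruct (Hj x) as [S [HS ->]]; apply sup_le; intros s Hs.
  destruct (proj1 (principal_iff Htot Hdom s) (HS s Hs)) as [-> | Hreg].
  - apply bot_le.
  - apply H, le_sup; auto.
Qed.

Lemma exists_regular_neq1 : not_01 L -> exists g, regular g /\ g <> one.
Proof.
  intros [x [Hx0 Hx1]]; apply NNPP; intros N; apply Hx0, le_bot_eq, le_of_regular_le.
  intros a Ha Hax; exfalso; apply N; exists a; split; auto.
  intros ->; apply Hx1; now apply one_le_eq.
Qed.

Hypothesis HpD : pseudo_Dedekind L.

Lemma regular_colon x a : regular x -> regular (col x a).
Proof.
  intros Hx.
  destruct (proj1 (principal_iff Htot Hdom _) (HpD x a (regular_principal Htot x Hx)))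
    as [E | H]; auto.
  exfalso; apply (regular_neq0 x Hx), le_bot_eq; rewrite <- E; apply le_colon_self.
Qed.

Lemma regular_colon_le_self t u : regular t -> regular u -> le (col u t) u -> t = one \/ u = one.
Proof.
  intros Ht Hu H; destruct (Htot t u) as [Htu | Hut].
  - right; apply one_le_eq; eapply le_trans; [| apply H].
    apply le_colon; now rewrite mul1.
  - left; apply (regular_le_mul_self u); auto.
    rewrite (regular_divides t Ht u Hut) at 1; rewrite mulC; now apply mul_le_mono_l.
Qed.

Lemma mul_powers_inf t : regular t ->
  let c := sup (fun y => forall k, le y (mpow t k)) in mul c t = c.
Proof.
  intros Ht c.
  assert (Hc : forall k, le c (mpow t k)) by (intros k; apply sup_le; auto).
  assert (Hct : le c t) by (pose proof (Hc 1) as H1; simpl in H1; now rewrite mulr1 in H1).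
  apply le_antisym; [apply mul_le_l |].
  rewrite (regular_divides t Ht c Hct) at 1; apply mul_le_mono_r, le_sup.
  intros k; apply (regular_mul_le_cancel t); auto.
  rewrite <- (regular_divides t Ht c Hct), mulC; apply (Hc (S k)).
Qed.

(* If [a] lies below all powers of [t], so does their meet [c], and [c t = c]; then
   [u = (a : c)] is regular with [(u : t) <= u], which forces [t = 1]. *)
Lemma archimedean t a : regular t -> t <> one -> regular a -> exists k, ~ le a (mpow t k).
Proof.
  intros Ht Ht1 Ha; apply NNPP; intros N.
  set (c := sup (fun y => forall k, le y (mpow t k))).
  assert (Ec : mul c t = c) by now apply mul_powers_inf.
  assert (Hac : le a c) by (apply le_sup; intros k; apply NNPP; eauto).
  set (u := col a c).
  assert (Hu : regular u) by now apply regular_colon.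
  assert (Hut : le (col u t) u).
  { apply colon_le; intros w Hw; apply le_colon.
    rewrite <- Ec, (mulC c t), mulA.
    eapply le_trans; [apply mul_le_mono_r, Hw | apply mul_colon_le]. }
  destruct (regular_colon_le_self t u Ht Hu Hut) as [Et | Eu]; [contradiction |].
  assert (Eca : c = a).
  { apply le_antisym; auto; rewrite <- (mul1 c), <- Eu; apply mul_colon_le. }
  apply Ht1, (regular_mul_eq_self a); auto; now rewrite mulC, <- Eca.
Qed.

Lemma mpow_le_iff t i j : regular t -> t <> one ->
  (le (mpow t i) (mpow t j) <-> j <= i).
Proof.
  intros Ht Ht1; split; [| apply mpow_le_anti].
  intros H; destruct (le_lt_dec j i) as [| Hij]; auto; exfalso.
  apply Ht1, (regular_le_mul_self (mpow t i)); [now apply mpow_regular |].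
  eapply le_trans; [apply H | apply (mpow_le_anti t (S i) j); lia].
Qed.

Lemma mpow_inj t i j : regular t -> t <> one -> mpow t i = mpow t j -> i = j.
Proof.
  intros Ht Ht1 E.
  assert (j <= i) by (apply (mpow_le_iff t i j Ht Ht1); rewrite E; apply le_refl).
  assert (i <= j) by (apply (mpow_le_iff t j i Ht Ht1); rewrite E; apply le_refl).
  lia.
Qed.

Section Discrete.
Variable pi : L.
Hypothesis Hpi : regular pi.
Hypothesis Hpi1 : pi <> one.
Hypothesis Hpi_max : forall g, regular g -> g <> one -> le g pi.

Lemma regular_mpow_generator a : regular a -> exists n, a = mpow pi n.
Proof.
  intros Ha; destruct (archimedean pi a Hpi Hpi1 Ha) as [K HK].
  destruct (nat_last_before (fun k => le a (mpow pi k)) K (le_one a) HK) as [k [Hk Hk1]].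
  exists k; set (t := col a (mpow pi k)).
  assert (Ht : regular t) by now apply regular_colon.
  assert (Ea : a = mul t (mpow pi k))
    by now apply (regular_divides _ (mpow_regular Hdom pi k Hpi)).
  destruct (classic (t = one)) as [Et | Nt].
  - now rewrite Ea, Et, mul1.
  - exfalso; apply Hk1; rewrite Ea; simpl; apply mul_le_mono_r; auto.
Qed.

Lemma discrete_cases x : x = bot \/ exists n, x = mpow pi n.
Proof.
  destruct (classic (exists a, regular a /\ le a x)) as [[a [Ha Hax]] | N].
  - right; destruct (regular_mpow_generator a Ha) as [j ->].
    destruct (nat_least (fun n => le (mpow pi n) x) j Hax) as [m [Hm Hleast]].
    exists m; apply le_antisym; auto; apply le_of_regular_le; intros b Hb Hbx.
    destruct (regular_mpow_generator b Hb) as [i ->]; apply mpow_le_anti; auto.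
  - left; apply le_bot_eq, le_of_regular_le; intros a Ha Hax; exfalso; eauto.
Qed.

Lemma mpow_pi_neq0 n : mpow pi n <> bot.
Proof. now apply regular_neq0, mpow_regular. Qed.

Definition zcoord (x : L) : option Z :=
  epsilon (inhabits None) (fun o => (x = bot /\ o = None) \/
     exists n, x = mpow pi n /\ o = Some (- Z.of_nat n)%Z).

Lemma zcoord_spec x : (x = bot /\ zcoord x = None) \/
  exists n, x = mpow pi n /\ zcoord x = Some (- Z.of_nat n)%Z.
Proof.
  unfold zcoord; apply epsilon_spec; destruct (discrete_cases x) as [-> | [n ->]]; eauto.
Qed.

Lemma zcoord0 : zcoord bot = None.
Proof.
  destruct (zcoord_spec bot) as [[_ E] | [n [E _]]]; auto.
  exfalso; now apply (mpow_pi_neq0 n).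
Qed.

Lemma zcoord_mpow n : zcoord (mpow pi n) = Some (- Z.of_nat n)%Z.
Proof.
  destruct (zcoord_spec (mpow pi n)) as [[E _] | [m [E1 E2]]].
  - exfalso; now apply (mpow_pi_neq0 n).
  - apply mpow_inj in E1; now subst.
Qed.

Lemma discrete_iso : iso_to L (option Z) Zm_carrier Zm_le Zm_mul.
Proof.
  exists zcoord; split; [| split; [| split; [| split]]].
  - intros x; destruct (discrete_cases x) as [-> | [n ->]].
    + now rewrite zcoord0.
    + rewrite zcoord_mpow; simpl; lia.
  - intros [z |] Hz.
    + exists (mpow pi (Z.to_nat (- z))); rewrite zcoord_mpow; simpl in Hz; f_equal; lia.
    + exists bot; apply zcoord0.
  - intros x y E.
    destruct (discrete_cases x) as [-> | [i ->]], (discrete_cases y) as [-> | [j ->]];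
      rewrite ?zcoord0, ?zcoord_mpow in E; try discriminate; auto.
    injection E; intros; f_equal; lia.
  - intros x y.
    destruct (discrete_cases x) as [-> | [i ->]], (discrete_cases y) as [-> | [j ->]];
      rewrite ?zcoord0, ?zcoord_mpow; simpl.
    + split; auto using le_refl.
    + split; auto using bot_le.
    + split; [intros H; now apply (mpow_pi_neq0 i), le_bot_eq | tauto].
    + rewrite mpow_le_iff by auto; lia.
  - intros x y.
    destruct (discrete_cases x) as [-> | [i ->]], (discrete_cases y) as [-> | [j ->]];
      rewrite ?mul0r, ?mulr0, ?zcoord0, ?zcoord_mpow; auto.
    rewrite <- mpowD, zcoord_mpow; simpl; f_equal; lia.
Qed.

End Discrete.

Section Valuation.
Local Open Scope R_scope.
Variable p : L.
Hypothesis Hp : regular p.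
Hypothesis Hp1 : p <> one.

(* [val a] is the real exponent [r] with "[a = p ^ r]". *)
Definition val_set (a : L) : R -> Prop := fun q =>
  exists m n, (0 < n)%nat /\ q = INR m / INR n /\ le (mpow a n) (mpow p m).
Definition val (a : L) : R := epsilon (inhabits 0) (is_lub (val_set a)).

Lemma val_set_ub a (m n : nat) : (0 < n)%nat -> le (mpow p m) (mpow a n) ->
  is_upper_bound (val_set a) (INR m / INR n).
Proof.
  intros Hn H q [m' [n' [Hn' [-> H']]]]; apply INR_div_le; auto.
  apply (mpow_le_iff p (m * n') (m' * n)); auto.
  rewrite !mpowM; eapply le_trans; [apply mpow_le_mono, H |].
  rewrite <- mpowM, Nat.mul_comm, mpowM; apply mpow_le_mono; auto.
Qed.

Lemma val_is_lub a : regular a -> is_lub (val_set a) (val a).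
Proof.
  intros Ha; unfold val; apply epsilon_spec.
  destruct (archimedean p a Hp Hp1 Ha) as [K HK].
  destruct (completeness (val_set a)) as [m Hm]; eauto.
  - exists (INR K / INR 1); apply val_set_ub; [lia |].
    simpl; rewrite mulr1; destruct (Htot a (mpow p K)); tauto.
  - exists (INR 0 / INR 1), 0%nat, 1%nat; repeat split; [lia | apply le_one].
Qed.

Lemma le_val a m n : regular a -> (0 < n)%nat -> le (mpow a n) (mpow p m) ->
  INR m / INR n <= val a.
Proof. intros Ha Hn H; apply (val_is_lub a Ha); exists m, n; auto. Qed.

Lemma val_le a m n : regular a -> (0 < n)%nat -> le (mpow p m) (mpow a n) ->
  val a <= INR m / INR n.
Proof. intros Ha Hn H; now apply (val_is_lub a Ha), val_set_ub. Qed.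

Lemma val_between a n : regular a -> (0 < n)%nat -> exists m,
  INR m / INR n <= val a /\ val a <= INR (S m) / INR n /\
  le (mpow a n) (mpow p m) /\ le (mpow p (S m)) (mpow a n).
Proof.
  intros Ha Hn.
  destruct (archimedean p (mpow a n) Hp Hp1 (mpow_regular Hdom a n Ha)) as [K HK].
  destruct (nat_last_before (fun m => le (mpow a n) (mpow p m)) K (le_one _) HK)
    as [m [H1 H2]].
  assert (H3 : le (mpow p (S m)) (mpow a n)) by (destruct (Htot (mpow a n) (mpow p (S m))); tauto).
  exists m; repeat split; auto; [apply le_val | apply val_le]; auto.
Qed.

Lemma val_ge0 a : regular a -> 0 <= val a.
Proof.
  intros Ha; replace 0 with (INR 0 / INR 1) by (simpl; field).
  apply le_val; auto; apply le_one.
Qed.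

Lemma valM a b : regular a -> regular b -> val (mul a b) = val a + val b.
Proof.
  intros Ha Hb.
  assert (Hclose : forall n, (0 < n)%nat ->
    val (mul a b) <= val a + val b + 2 / INR n /\ val a + val b <= val (mul a b) + 2 / INR n).
  { intros n Hn.
    destruct (val_between a n Ha Hn) as [ma [Ha1 [Ha2 [Ha3 Ha4]]]].
    destruct (val_between b n Hb Hn) as [mb [Hb1 [Hb2 [Hb3 Hb4]]]].
    assert (L1 : INR (ma + mb) / INR n <= val (mul a b)).
    { apply le_val; [now apply regularM | auto |].
      rewrite mpowMn, mpowD; now apply mul_le_mono. }
    assert (L2 : val (mul a b) <= INR (S ma + S mb) / INR n).
    { apply val_le; [now apply regularM | auto |].
      rewrite mpowMn, mpowD; now apply mul_le_mono. }
    rewrite plus_INR in L1, L2; rewrite !S_INR in L2; rewrite S_INR in Ha2, Hb2.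
    unfold Rdiv in *; set (k := / INR n) in *.
    rewrite !Rmult_plus_distr_r in L1, L2, Ha2, Hb2; split; lra. }
  apply Rle_antisym; apply (Rle_of_le_plus_div _ _ 2); intros n Hn;
    specialize (Hclose n Hn); lra.
Qed.

Lemma val_le_anti a b : regular a -> regular b -> le a b -> val b <= val a.
Proof.
  intros Ha Hb H; apply (val_is_lub b Hb); intros q [m [n [Hn [-> H']]]].
  apply le_val; auto; eapply le_trans; [apply mpow_le_mono, H | exact H'].
Qed.

Lemma val_gt0 t : regular t -> t <> one -> 0 < val t.
Proof.
  intros Ht Ht1; destruct (archimedean t p Ht Ht1 Hp) as [k Hk].
  destruct k as [| k]; [exfalso; apply Hk, le_one |].
  assert (H : INR 1 / INR (S k) <= val t).
  { apply le_val; auto; [lia |]; simpl mpow; rewrite mulr1.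
    destruct (Htot p (mpow t (S k))); tauto. }
  assert (0 < INR (S k)) by (apply lt_0_INR; lia).
  eapply Rlt_le_trans; [| exact H]; apply Rdiv_lt_0_compat; [simpl; lra | assumption].
Qed.

Lemma val_lt a b : regular a -> regular b -> le a b -> a <> b -> val b < val a.
Proof.
  intros Ha Hb H Hne; set (t := col a b).
  assert (Ht : regular t) by now apply regular_colon.
  assert (Ea : a = mul t b) by now apply regular_divides.
  assert (Ht1 : t <> one) by (intros E; apply Hne; now rewrite Ea, E, mul1).
  rewrite Ea, valM by auto; pose proof (val_gt0 t Ht Ht1); lra.
Qed.

Lemma le_iff_val_le a b : regular a -> regular b -> (le a b <-> val b <= val a).
Proof.
  intros Ha Hb; split; [now apply val_le_anti |].
  intros H; destruct (Htot a b) as [| Hba]; auto.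
  destruct (classic (b = a)) as [-> | Hne]; [apply le_refl |].
  pose proof (val_lt b a Hb Ha Hba Hne); lra.
Qed.

Lemma val_inj a b : regular a -> regular b -> val a = val b -> a = b.
Proof. intros Ha Hb E; apply le_antisym; apply le_iff_val_le; auto; lra. Qed.

Lemma val1 : val one = 0.
Proof.
  pose proof (valM one one (regular1 Hdom) (regular1 Hdom)) as E; rewrite mul1 in E; lra.
Qed.

Lemma val_mpow g k : regular g -> val (mpow g k) = INR k * val g.
Proof.
  intros Hg; induction k; simpl mpow; [rewrite val1; simpl; ring |].
  rewrite valM, IHk, S_INR by (auto using mpow_regular); ring.
Qed.

Section Dense.
Hypothesis Hdense : forall g, regular g -> g <> one -> exists h, regular h /\ h <> one /\ ~ le h g.

Lemma val_half g : regular g -> g <> one -> exists h, regular h /\ h <> one /\ 2 * val h <= val g.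
Proof.
  intros Hg Hg1; destruct (Hdense g Hg Hg1) as [h [Hh [Hh1 Hhg]]].
  assert (Hgh : le g h) by (destruct (Htot h g); tauto).
  set (h' := col g h).
  assert (Hh' : regular h') by now apply regular_colon.
  assert (Eg : g = mul h' h) by now apply regular_divides.
  assert (Hh'1 : h' <> one) by (intros E; apply Hhg; rewrite Eg, E, mul1; apply le_refl).
  assert (Vg : val g = val h' + val h) by (rewrite Eg; now apply valM).
  destruct (Rle_dec (val h) (val h')); [exists h | exists h']; (split; [auto | split; [auto | lra]]).
Qed.

Lemma val_small eps : 0 < eps -> exists g, regular g /\ g <> one /\ val g < eps.
Proof.
  intros Heps.
  assert (Hn : forall n, exists g, regular g /\ g <> one /\ INR (S n) * val g <= val p).
  { induction n as [| n [g [Hg [Hg1 Hgn]]]].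
    - exists p; split; [auto | split; [auto | simpl; lra]].
    - destruct (val_half g Hg Hg1) as [h [Hh [Hh1 Hhg]]].
      exists h; split; [auto | split; [auto |]].
      pose proof (val_gt0 h Hh Hh1); pose proof (pos_INR n).
      rewrite !S_INR in *; nra. }
  destruct (INR_archimed eps (val p) Heps) as [n Hvp].
  destruct (Hn n) as [g [Hg [Hg1 Hgn]]]; exists g; split; [auto | split; [auto |]].
  pose proof (val_gt0 g Hg Hg1); pose proof (pos_INR n); rewrite S_INR in Hgn; nra.
Qed.

Lemma val_approx r eps : 0 <= r -> 0 < eps -> exists b, regular b /\ r < val b /\ val b < r + eps.
Proof.
  intros Hr Heps; destruct (val_small eps Heps) as [g [Hg [Hg1 Hge]]].
  pose proof (val_gt0 g Hg Hg1) as Hg0.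
  destruct (INR_archimed (val g) r Hg0) as [K HK].
  destruct (nat_last_before (fun k => INR k * val g <= r) K) as [k [Hk1 Hk2]];
    [simpl; lra | lra |].
  exists (mpow g (S k)); rewrite val_mpow, S_INR by auto.
  split; [now apply mpow_regular | rewrite S_INR in Hk2; split; lra].
Qed.

Definition val_gt (r : R) : L := sup (fun a => regular a /\ r < val a).

Lemma le_val_gt r a : regular a -> r < val a -> le a (val_gt r).
Proof. intros; apply le_sup; auto. Qed.

Lemma val_gt_lt r a : regular a -> le a (val_gt r) -> r < val a.
Proof.
  intros Ha H; destruct (regular_le_sup a _ Ha H) as [s [[Hs Hrs] Has]].
  apply le_iff_val_le in Has; auto; lra.
Qed.

Lemma val_colon_gt q r : regular q -> 0 <= r -> r <= val q ->
  val (col q (val_gt r)) = val q - r.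
Proof.
  intros Hq Hr Hrq; set (u := col q (val_gt r)).
  assert (Hu : regular u) by now apply regular_colon.
  apply Rle_antisym; apply Rle_plus_epsilon; intros eps Heps.
  - destruct (val_approx (val q - r) eps) as [b [Hb [Hb1 Hb2]]]; try lra.
    assert (Hbu : le b u).
    { apply le_colon; unfold val_gt; apply mul_sup_le; intros s [Hs Hrs].
      apply le_iff_val_le; [now apply regularM | auto |].
      rewrite valM by auto; lra. }
    apply le_iff_val_le in Hbu; auto; lra.
  - destruct (val_approx r eps) as [a [Ha [Ha1 Ha2]]]; try lra.
    assert (Hua : le (mul u a) q).
    { eapply le_trans; [apply mul_le_mono_l, (le_val_gt r); auto | apply mul_colon_le]. }
    apply le_iff_val_le in Hua; [| now apply regularM | auto].
    rewrite valM in Hua by auto; lra.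
Qed.

(* The witness is [(q : (q : val_gt r))] for any regular [q] with [r < val q]. *)
Lemma val_surj r : 0 <= r -> exists w, regular w /\ val w = r.
Proof.
  intros Hr; destruct (val_approx r 1) as [q [Hq [Hq1 _]]]; try lra.
  set (u := col q (val_gt r)).
  assert (Hu : regular u) by now apply regular_colon.
  assert (Vu : val u = val q - r) by (apply val_colon_gt; auto; lra).
  assert (Eq : q = mul (col q u) u) by (apply regular_divides; auto; apply le_colon_self).
  exists (col q u); split; [now apply regular_colon |].
  rewrite Eq, valM in Vu by (auto using regular_colon); lra.
Qed.

Definition val_image (x : L) : ext -> Prop := fun e =>
  match e with None => True | Some t => exists a, regular a /\ le a x /\ val a = t end.

Lemma val_image_up x t t' : val_image x (Some t) -> t <= t' -> val_image x (Some t').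
Proof.
  intros [a [Ha [Hax <-]]] Ht; destruct (val_surj t') as [w [Hw <-]].
  - pose proof (val_ge0 a Ha); lra.
  - exists w; split; [auto | split; auto].
    eapply le_trans; [| exact Hax]; now apply le_iff_val_le.
Qed.

Lemma val_image_carrier x : R1_carrier (val_image x).
Proof.
  destruct (classic (exists a, regular a /\ le a x)) as [[a [Ha Hax]] | N].
  - destruct (up_closed_interval (fun t => val_image x (Some t))) as [r [Hr [Hopen | Hclosed]]].
    + intros t t'; apply val_image_up.
    + exists (val a), a; auto.
    + intros t [b [Hb [_ <-]]]; now apply val_ge0.
    + left; exists r; split; auto; apply pred_ext; intros [t |]; [apply Hopen | simpl; tauto].
    + right; left; exists r; split; auto; apply pred_ext; intros [t |]; [apply Hclosed | simpl; tauto].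
  - right; right; apply pred_ext; intros [t |]; unfold Iinf; simpl.
    + split; [intros [a [Ha [Hax _]]]; exfalso; eauto | discriminate].
    + tauto.
Qed.

Lemma le_iff_val_image_le x y : le x y <-> R1_le (val_image x) (val_image y).
Proof.
  split.
  - intros H [t |] Ht; simpl in *; auto.
    destruct Ht as [a [Ha [Hax <-]]]; exists a; split; [auto | split; [eapply le_trans; eauto | auto]].
  - intros H; apply le_of_regular_le; intros a Ha Hax.
    destruct (H (Some (val a))) as [b [Hb [Hby Eb]]]; [exists a; auto |].
    apply val_inj in Eb; subst; auto.
Qed.

Lemma val_image_surj A : R1_carrier A -> exists x, val_image x = A.
Proof.
  intros [[r [Hr ->]] | [[r [Hr ->]] | ->]].
  - exists (val_gt r); apply pred_ext; intros [t |]; simpl; [| tauto]; split.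
    + intros [a [Ha [Hax <-]]]; now apply val_gt_lt.
    + intros Ht; destruct (val_surj t) as [w [Hw <-]]; [lra |].
      exists w; split; [auto | split; [now apply le_val_gt | auto]].
  - destruct (val_surj r Hr) as [w [Hw <-]]; exists w.
    apply pred_ext; intros [t |]; simpl; [| tauto]; split.
    + intros [a [Ha [Hax <-]]]; now apply le_iff_val_le.
    + intros Ht; destruct (val_surj t) as [a [Ha <-]]; [pose proof (val_ge0 w Hw); lra |].
      exists a; split; [auto | split; [now apply le_iff_val_le | auto]].
  - exists bot; apply pred_ext; intros [t |]; unfold Iinf; simpl; [| tauto].
    split; [| discriminate].
    intros [a [Ha [Hax _]]]; exfalso; apply (regular_neq0 a Ha); now apply le_bot_eq.
Qed.

Lemma regular_le_mul c x y : regular c -> le c (mul x y) ->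
  exists a b, regular a /\ regular b /\ le a x /\ le b y /\ le c (mul a b).
Proof.
  intros Hc H.
  destruct (Hj y) as [Sy [HSy Ey]]; rewrite Ey, ml_mul_sup in H.
  destruct (regular_le_sup c _ Hc H) as [z [[b [Hb ->]] Hcb]].
  destruct (Hj x) as [Sx [HSx Ex]]; rewrite mulC, Ex, ml_mul_sup in Hcb.
  destruct (regular_le_sup c _ Hc Hcb) as [z [[a [Ha ->]] Hca]].
  assert (Hba : mul b a <> bot)
    by (intros E; apply (regular_neq0 c Hc), le_bot_eq; now rewrite <- E).
  exists a, b; split; [| split; [| split; [| split]]].
  - apply (principal_regular Hdom); auto; intros ->; apply Hba, mulr0.
  - apply (principal_regular Hdom); auto; intros ->; apply Hba, mul0r.
  - rewrite Ex; now apply le_sup.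
  - rewrite Ey; now apply le_sup.
  - now rewrite mulC.
Qed.

Lemma val_image_mul x y : val_image (mul x y) = R1_mul (val_image x) (val_image y).
Proof.
  apply pred_ext; intros [t |]; split.
  - intros [c [Hc [Hcxy <-]]].
    destruct (regular_le_mul c x y Hc Hcxy) as [a [b [Ha [Hb [Hax [Hby Hcab]]]]]].
    set (d := col c (mul a b)).
    assert (Hd : regular d) by now apply regular_colon.
    assert (Ec : c = mul d (mul a b)) by (apply regular_divides; auto; now apply regularM).
    exists (Some (val (mul d a))), (Some (val b)); split; [| split].
    + exists (mul d a); split; [now apply regularM |].
      split; [eapply le_trans; [apply mul_le_r | exact Hax] | auto].
    + exists b; auto.
    + simpl; f_equal; rewrite Ec, mulA, valM by (auto using regularM); ring.
  - intros [[a0 |] [[b0 |] [Ha0 [Hb0 E]]]]; simpl in E; try discriminate.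
    injection E; intros ->.
    destruct Ha0 as [a [Ha [Hax <-]]], Hb0 as [b [Hb [Hby <-]]].
    exists (mul a b); split; [now apply regularM |].
    split; [now apply mul_le_mono | now apply valM].
  - intros _; now exists None, None.
  - intros _; exact I.
Qed.

Lemma dense_iso : iso_to L (ext -> Prop) R1_carrier R1_le R1_mul.
Proof.
  exists val_image; split; [| split; [| split; [| split]]].
  - apply val_image_carrier.
  - apply val_image_surj.
  - intros x y E; apply le_antisym; apply le_iff_val_image_le; rewrite E; intros e; auto.
  - apply le_iff_val_image_le.
  - apply val_image_mul.
Qed.

End Dense.
End Valuation.

Lemma pseudo_Dedekind_iso : not_01 L ->
  iso_to L (option Z) Zm_carrier Zm_le Zm_mul \/ iso_to L (ext -> Prop) R1_carrier R1_le R1_mul.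
Proof.
  intros H01; destruct (exists_regular_neq1 H01) as [p [Hp Hp1]].
  destruct (classic (exists pi, regular pi /\ pi <> one /\
                       forall g, regular g -> g <> one -> le g pi)) as [[pi [Hpi [Hpi1 Hmax]]] | N].
  - left; now apply (discrete_iso pi).
  - right; apply (dense_iso p); auto.
    intros g Hg Hg1; apply NNPP; intros Ng; apply N; exists g; split; [auto | split; [auto |]].
    intros h Hh Hh1; apply NNPP; intros Nh; apply Ng; eauto.
Qed.

End TotallyOrderedCLattice.

Definition target_sharp {T : Type} (P : T -> Prop) (leT : T -> T -> Prop) (mulT : T -> T -> T) :=
  forall A1 A2 B, P A1 -> P A2 -> P B -> leT (mulT A1 A2) B ->
    exists B1 B2, P B1 /\ P B2 /\ leT A1 B1 /\ leT A2 B2 /\ B = mulT B1 B2.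

Lemma sharp_of_iso_target_sharp (L : MultLattice) {T : Type} P leT mulT :
  @target_sharp T P leT mulT -> iso_to L T P leT mulT -> sharp L.
Proof.
  intros Hs [f [HP [Hsurj [Hinj [Hle Hmul]]]]] a1 a2 b H.
  apply Hle in H; rewrite Hmul in H.
  destruct (Hs (f a1) (f a2) (f b) (HP _) (HP _) (HP _) H)
    as [B1 [B2 [HB1 [HB2 [H1 [H2 E]]]]]].
  destruct (Hsurj B1 HB1) as [b1 <-], (Hsurj B2 HB2) as [b2 <-].
  exists b1, b2; split; [now apply Hle | split; [now apply Hle |]].
  apply Hinj; now rewrite Hmul.
Qed.

Lemma Zm_sharp : target_sharp Zm_carrier Zm_le Zm_mul.
Proof.
  intros A1 A2 B H1 H2 HB H.
  destruct (classic (Zm_le A1 B)) as [HA1 | NA1].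
  { exists B, (Some 0%Z); destruct B as [b |]; simpl in *; repeat split; auto; try lia.
    f_equal; lia. }
  destruct (classic (Zm_le A2 B)) as [HA2 | NA2].
  { exists (Some 0%Z), B; destruct B as [b |]; simpl in *; repeat split; auto; lia. }
  destruct A1 as [a1 |], A2 as [a2 |], B as [b |]; simpl in *; try tauto.
  exists (Some a1), (Some (b - a1)%Z); simpl; repeat split; try lia.
  f_equal; lia.
Qed.

Local Open Scope R_scope.

Definition Iint (closed : bool) (r : R) : ext -> Prop :=
  if closed then Iclosed r else Iopen r.

Lemma R1_carrier_Iint c r : 0 <= r -> R1_carrier (Iint c r).
Proof. intros Hr; destruct c; [right; left | left]; eauto. Qed.

Lemma R1_carrier_cases A : R1_carrier A -> (exists c r, 0 <= r /\ A = Iint c r) \/ A = Iinf.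
Proof.
  intros [[r [Hr ->]] | [[r [Hr ->]] | ->]]; auto.
  - left; now exists false, r.
  - left; now exists true, r.
Qed.

Lemma R1_carrier_None A : R1_carrier A -> A None.
Proof. intros [[[] [r [_ ->]]] | ->]%R1_carrier_cases; reflexivity. Qed.

Lemma R1_carrier_up A x y : R1_carrier A -> A (Some x) -> x <= y -> A (Some y).
Proof.
  intros [[[] [r [_ ->]]] | ->]%R1_carrier_cases; simpl; [lra | lra | discriminate].
Qed.

Lemma R1_carrier_ge0 A x : R1_carrier A -> A (Some x) -> 0 <= x.
Proof.
  intros [[[] [r [Hr ->]]] | ->]%R1_carrier_cases; simpl; [lra | lra | discriminate].
Qed.

Lemma R1_mulC A B : R1_mul A B = R1_mul B A.
Proof.
  apply pred_ext; intros z; split; intros [a [b [Ha [Hb ->]]]]; exists b, a;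
    (split; [auto | split; [auto | destruct a, b; simpl; auto; f_equal; ring]]).
Qed.

Lemma R1_mul_top A : R1_carrier A -> R1_mul A (Iclosed 0) = A.
Proof.
  intros HA; apply pred_ext; intros [z |]; split.
  - intros [[a |] [[b |] [Ha [Hb E]]]]; simpl in *; try discriminate.
    injection E; intros ->; apply (R1_carrier_up A a); auto; lra.
  - intros Hz; exists (Some z), (Some 0); simpl; split; [auto | split; [lra | f_equal; ring]].
  - intros _; now apply R1_carrier_None.
  - intros HN; now exists None, None.
Qed.

Lemma R1_mul_Iint c1 c2 s t : R1_mul (Iint c1 s) (Iint c2 t) = Iint (andb c1 c2) (s + t).
Proof.
  apply pred_ext; intros [z |]; split.
  - intros [[a |] [[b |] [Ha [Hb E]]]]; simpl in E; try discriminate.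
    injection E; intros ->; destruct c1, c2; simpl in *; lra.
  - intros Hz.
    assert (Hst : s + t <= z) by (destruct c1, c2; simpl in *; lra).
    set (h := (z - s - t) / 2).
    exists (Some (s + h)), (Some (t + h)); split; [| split; [| simpl; f_equal; unfold h; field]];
      destruct c1, c2; simpl in *; unfold h; lra.
  - intros _; destruct (andb c1 c2); exact I.
  - intros _; exists None, None; destruct c1, c2; simpl; auto.
Qed.

(* The second factor is the quotient [(Iint cb r : Iint c1 s)]: its endpoint is [r - s],
   and it is closed unless [Iint cb r] is open and [Iint c1 s] is closed. *)
Lemma R1_sharp_Iint c1 s cb r A2 : 0 <= s <= r ->
  R1_le (R1_mul (Iint c1 s) A2) (Iint cb r) ->
  R1_le A2 (Iint (orb cb (negb c1)) (r - s)) /\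
  Iint cb r = R1_mul (Iint (orb c1 cb) s) (Iint (orb cb (negb c1)) (r - s)).
Proof.
  intros Hsr H; split.
  - intros [y |] Hy; [| destruct (orb cb (negb c1)); exact I].
    assert (Hsum : forall x, Iint c1 s (Some x) -> Iint cb r (Some (x + y))).
    { intros x Hx; apply H; exists (Some x), (Some y); auto. }
    destruct (Rtotal_order y (r - s)) as [Hlt | [Heq | Hgt]].
    + exfalso; specialize (Hsum (s + (r - s - y) / 2)).
      destruct c1, cb; simpl in Hsum; lra.
    + subst y; destruct c1, cb; simpl; try lra.
      specialize (Hsum s); simpl in Hsum; lra.
    + destruct (orb cb (negb c1)); simpl; lra.
  - rewrite R1_mul_Iint; replace (s + (r - s)) with r by ring.
    now destruct c1, cb.
Qed.

Lemma R1_sharp : target_sharp R1_carrier R1_le R1_mul.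
Proof.
  intros A1 A2 B H1 H2 HB H.
  destruct (classic (R1_le A1 B)) as [HA1 | NA1].
  { exists B, (Iclosed 0); rewrite R1_mul_top by auto.
    repeat split; auto; [apply (R1_carrier_Iint true); lra | intros [y |] Hy; simpl; auto].
    now apply (R1_carrier_ge0 A2). }
  destruct (classic (R1_le A2 B)) as [HA2 | NA2].
  { exists (Iclosed 0), B; rewrite R1_mulC, R1_mul_top by auto.
    repeat split; auto; [apply (R1_carrier_Iint true); lra | intros [y |] Hy; simpl; auto].
    now apply (R1_carrier_ge0 A1). }
  apply not_all_ex_not in NA1; destruct NA1 as [[x1 |] Hx1];
    [| pose proof (R1_carrier_None B HB); tauto].
  apply not_all_ex_not in NA2; destruct NA2 as [[x2 |] Hx2];
    [| pose proof (R1_carrier_None B HB); tauto].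
  apply imply_to_and in Hx1, Hx2; destruct Hx1 as [Ax1 Bx1], Hx2 as [Ax2 Bx2].
  destruct (R1_carrier_cases B HB) as [[cb [r [Hr ->]]] | ->].
  2: { exfalso; assert (E : Iinf (Some (x1 + x2))) by (apply H; exists (Some x1), (Some x2); auto).
       discriminate E. }
  destruct (R1_carrier_cases A1 H1) as [[c1 [s [Hs ->]]] | ->]; [| discriminate Ax1].
  assert (Hsr : s <= r) by (destruct c1, cb; simpl in *; lra).
  destruct (R1_sharp_Iint c1 s cb r A2 (conj Hs Hsr) H) as [HA2 E].
  exists (Iint (orb c1 cb) s), (Iint (orb cb (negb c1)) (r - s)).
  repeat split; auto using R1_carrier_Iint.
  - apply R1_carrier_Iint; lra.
  - intros [y |] Hy; [destruct c1, cb; simpl in *; lra | destruct (orb c1 cb); exact I].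
Qed.

Local Close Scope R_scope.

Lemma sharp_of_iso_Zm_or_R1 (L : MultLattice) :
  iso_to L (option Z) Zm_carrier Zm_le Zm_mul \/ iso_to L (ext -> Prop) R1_carrier R1_le R1_mul ->
  sharp L.
Proof.
  intros [Hiso | Hiso].
  - exact (sharp_of_iso_target_sharp L _ _ _ Zm_sharp Hiso).
  - exact (sharp_of_iso_target_sharp L _ _ _ R1_sharp Hiso).
Qed.

Theorem theorem3p8 (L : MultLattice) :
  not_01 L -> totally_ordered L -> C_lattice L -> is_domain L ->
  joins_of_principals L ->
  (sharp L <-> pseudo_Dedekind L) /\
  (pseudo_Dedekind L <->
     (iso_to L (option Z) Zm_carrier Zm_le Zm_mul \/
      iso_to L (ext -> Prop) R1_carrier R1_le R1_mul)).
Proof.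
  intros H01 Htot HCl Hdom Hj.
  pose proof (sharp_pseudo_Dedekind Htot Hdom) as Hsharp_pD.
  pose proof (fun HpD => pseudo_Dedekind_iso Htot Hdom HCl Hj HpD H01) as HpD_iso.
  pose proof (sharp_of_iso_Zm_or_R1 L) as Hiso_sharp.
  split; split; auto.
Qed.
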